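(* Let $\pi$ be a projective plane of order $q$, let $2\le n\le q$, and let $\phi$ be an embedding of the complete bipartite graph $K_{n,q}$ into $\pi$, where $U$ and $V$ are the two classes of $K_{n,q}$ with $|U|=n$ and $|V|=q$. Then the points of $\phi(U)$ are collinear.
   Context: A finite projective plane of order $q$ has $q^2+q+1$ points and lines, $q+1$ points on each line and $q+1$ lines through each point; any two distinct points lie on a unique line and any two lines meet in a unique point. An embedding of a simple graph $G=(V,E)$ into a projective plane is an injective map $\phi$ from $V$ to the points such that the induced map sending an edge $ab$ to the line through $\phi(a),\phi(b)$ is injective on $E$. *)

From mathcomp Require Import all_boot.
Set Implicit Arguments. Unset Strict Implicit. Unset Printing Implicit Defensive.

Definition proj_plane (P L : finType) (inc : P -> L -> bool) (q : nat) : Prop :=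
  [/\ #|P| = q ^ 2 + q + 1 /\ #|L| = q ^ 2 + q + 1,
      (forall l : L, #|[set p | inc p l]| = q.+1),
      (forall p : P, #|[set l | inc p l]| = q.+1),
      (forall p1 p2 : P, p1 != p2 ->
          exists! l : L, inc p1 l && inc p2 l)
    & (forall l1 l2 : L, l1 != l2 ->
          exists! p : P, inc p l1 && inc p l2)].

(* Embedding of a simple graph (V, adj) into the plane: an injective map on
   vertices such that the induced map sending an edge ab to the line through
   phi a and phi b is injective on edges (edges being unordered pairs). *)
Definition embedding (V : finType) (adj : rel V) (P L : finType)
  (inc : P -> L -> bool) (phi : V -> P) : Prop :=
  injective phi /\
  forall (a b c d : V) (l : L), adj a b -> adj c d ->
    inc (phi a) l -> inc (phi b) l -> inc (phi c) l -> inc (phi d) l ->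
    (a = c /\ b = d) \/ (a = d /\ b = c).

(* The complete bipartite graph K_{n,m} on vertex set 'I_n + 'I_m, with
   classes U = inl-vertices and V = inr-vertices. *)
Definition Kbip (n m : nat) : rel ('I_n + 'I_m)%type :=
  fun x y => match x, y with
             | inl _, inr _ | inr _, inl _ => true
             | _, _ => false
             end.

From mathcomp Require Import all_boot.

Set Implicit Arguments.
Unset Strict Implicit.
Unset Printing Implicit Defensive.

(* Fix u0 in U and put x := phi u0.  The lines joining x to the q points of
   phi(V) are pairwise distinct, since two edges u0 v, u0 v' on one line would
   violate the embedding condition; so they fill all but one line l of the
   q + 1 lines through x.  For any other u in U, the line through x and phi u
   cannot be one of them (it would carry both edges u0 v and u v), hence it is
   l, and l contains all of phi(U). *)

Lemma setD_subset_card1 (T : finType) (A S : {set T}) :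
  A \subset S -> #|S| = #|A|.+1 -> exists l, S :\: A = [set l].
Proof.
move=> sAS cardS; apply/cards1P/eqP.
by rewrite cardsD (setIidPr sAS) cardS subSnn.
Qed.

Section ProjectivePlane.

Variables (P L : finType) (inc : P -> L -> bool) (q : nat).
Hypothesis plane : proj_plane inc q.

Lemma line_through (p1 p2 : P) : p1 != p2 -> {l : L | inc p1 l && inc p2 l}.
Proof.
case: plane => _ _ _ join _ /join ex_l; apply: sigW.
by have [l [hl _]] := ex_l; exists l.
Qed.

Lemma pencil_complement (x : P) (f : 'I_q -> L) :
  injective f -> (forall j, inc x (f j)) ->
  exists l, inc x l /\ forall m, inc x m -> (forall j, f j != m) -> m = l.
Proof.
case: plane => _ _ pencil _ _ f_inj f_x.
have sub : f @: [set: 'I_q] \subset [set l | inc x l].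
  by apply/subsetP => _ /imsetP[j _ ->]; rewrite inE.
have [|l defl] := setD_subset_card1 sub.
  by rewrite pencil card_imset // cardsT card_ord.
have : l \in [set l | inc x l] :\: f @: [set: 'I_q] by rewrite defl set11.
rewrite !inE => /andP[_ xl]; exists l; split=> // m xm fm.
apply/set1P; rewrite -defl !inE xm andbT.
by apply/imsetP => -[j _ /esym/eqP]; rewrite (negbTE (fm j)).
Qed.

End ProjectivePlane.

Section BipartiteEmbedding.

Variables (P L : finType) (inc : P -> L -> bool) (n q : nat).
Variable phi : ('I_n + 'I_q)%type -> P.
Hypothesis emb : embedding (@Kbip n q) inc phi.

Lemma Kbip_embedding_line (u u' : 'I_n) (v v' : 'I_q) (l : L) :
  inc (phi (inl u)) l -> inc (phi (inr v)) l ->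
  inc (phi (inl u')) l -> inc (phi (inr v')) l -> u = u' /\ v = v'.
Proof.
case: emb => _ edge_inj hu hv hu' hv'.
have := edge_inj (inl u) (inr v) (inl u') (inr v') l isT isT hu hv hu' hv'.
by case=> [[[->] [->]] | []].
Qed.

Lemma Kbip_embedding_neq (w w' : ('I_n + 'I_q)%type) :
  w != w' -> phi w != phi w'.
Proof. by case: emb => phi_inj _; apply: contraNneq => /phi_inj ->. Qed.

End BipartiteEmbedding.

Theorem lemma3p4 (P L : finType) (inc : P -> L -> bool) (q n : nat)
  (phi : ('I_n + 'I_q)%type -> P) :
  proj_plane inc q -> 2 <= n -> n <= q ->
  embedding (@Kbip n q) inc phi ->
  exists l : L, forall u : 'I_n, inc (phi (inl u)) l.
Proof.
move=> plane n_ge2 _ emb.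
pose u0 : 'I_n := Ordinal (ltnW n_ge2).
have line_x w : w != inl u0 -> {l : L | inc (phi (inl u0)) l && inc (phi w) l}.
  move=> hw; apply: (line_through plane); apply: (Kbip_embedding_neq emb).
  by rewrite eq_sym.
have [f f_spec] : {f : 'I_q -> L |
    forall j, inc (phi (inl u0)) (f j) && inc (phi (inr j)) (f j)}.
  by exists (fun j => sval (line_x (inr j) isT)) => j; case: (line_x _ _).
have f_inj : injective f.
  move=> j k fjk; have /andP[xj vj] := f_spec j; have /andP[_ vk] := f_spec k.
  by rewrite fjk in xj vj; case: (Kbip_embedding_line emb xj vj xj vk).
have f_x j : inc (phi (inl u0)) (f j) by case/andP: (f_spec j).
have [l [xl l_unique]] := pencil_complement plane f_inj f_x.
exists l => u; have [-> // | u_neq] := eqVneq u u0.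
have u_neq' : inl u != inl u0 :> ('I_n + 'I_q)%type.
  by apply: contra_neq u_neq => -[].
case: (line_x _ u_neq') => m /andP[xm um]; rewrite -(l_unique _ xm) //.
move=> j; apply/eqP => fjm; have /andP[_ vj] := f_spec j; rewrite fjm in vj.
by case: (Kbip_embedding_line emb um vj xm vj) => /eqP; rewrite (negbTE u_neq).
Qed.
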